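(* In the MHAV setting described in the context, with $Y$, $f$, $\Lambda$ and $\phi_Y$ fixed, the set of paths of positive probability under $\bar P_{\mathrm{MH}}$ is the same for all parameter values $\alpha'\in(0,1)$ and $\alpha,\beta\in(0,1)$ with $\alpha+\beta<1$.
   Context: MHAV setting: $Y$ is a finite nonempty set, $f:Y\to\mathbb{R}$; $\Lambda=\{\lambda_1<\dots<\lambda_n\}$ positive reals, $n\ge2$; $\bar\Pi(\lambda,y)=\lambda^{-f(y)}/Z$ on $\Lambda\times Y$, $Z=\sum_{\lambda,y}\lambda^{-f(y)}$. $\phi_Y$ is an irreducible Markov kernel on $Y$. For $\alpha'\in(0,1)$: $\phi_\Lambda(\lambda_1,\lambda_2)=1$, $\phi_\Lambda(\lambda_n,\lambda_{n-1})=1$, and for $1<i<n$, $\phi_\Lambda(\lambda_i,\lambda_{i+1})=\alpha'$, $\phi_\Lambda(\lambda_i,\lambda_{i-1})=1-\alpha'$, other entries $0$. $\bar\phi[(\lambda,y),(\lambda',y')]=\alpha\phi_\Lambda(\lambda,\lambda')$ if $\lambda\ne\lambda',y=y'$; $\beta\phi_Y(y,y')$ if $\lambda=\lambda',y\ne y'$; $(1-\alpha-\beta)+\beta\phi_Y(y,y)$ if $(\lambda,y)=(\lambda',y')$; $0$ otherwise. $\bar{\mathsf{Acc}}(x,x')=\min\{1,\frac{\bar\phi(x',x)\bar\Pi(x')}{\bar\phi(x,x')\bar\Pi(x)}\}$; $\bar P_{\mathrm{MH}}(x,x')=\bar\phi(x,x')\bar{\mathsf{Acc}}(x,x')$ for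 $x\ne x'$, $\bar P_{\mathrm{MH}}(x,x)=1-\sum_{x'\ne x}\bar P_{\mathrm{MH}}(x,x')$. A path is a finite sequence $x_0,x_1,\dots,x_m$ in $\Lambda\times Y$; its probability is $\prod_{i=0}^{m-1}\bar P_{\mathrm{MH}}(x_i,x_{i+1})$. *)

From HB Require Import structures.
From mathcomp Require Import all_boot all_order all_algebra.
From mathcomp Require Import reals exp.
Set Implicit Arguments. Unset Strict Implicit. Unset Printing Implicit Defensive.
Import Order.TTheory GRing.Theory Num.Theory.
Local Open Scope ring_scope.

Section MHAV.
Variables (R : realType) (Y : finType) (n : nat).

(* state space Lambda x Y, Lambda indexed by 'I_n: lam i = lambda_(i+1) *)
Definition XS := ('I_n * Y)%type.

Definition markov_kernel (phi : Y -> Y -> R) : Prop :=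
  (forall y y', 0 <= phi y y') /\ (forall y, \sum_(y' : Y) phi y y' = 1).
Definition irreducible (phi : Y -> Y -> R) : Prop :=
  forall y y', exists s : seq Y,
    path (fun a b => 0 < phi a b) y s /\ last y s = y'.

Definition Zc (lam : 'I_n -> R) (f : Y -> R) : R :=
  \sum_(x : XS) powR (lam x.1) (- f x.2).
Definition Pibar (lam : 'I_n -> R) (f : Y -> R) (x : XS) : R :=
  powR (lam x.1) (- f x.2) / Zc lam f.

Definition phiL (a' : R) (i j : 'I_n) : R :=
  if val i == 0%N then (if val j == 1%N then 1 else 0)
  else if val i == n.-1 then (if val j == n.-2 then 1 else 0)
  else if val j == (val i).+1 then a'
  else if (val j).+1 == val i then 1 - a'
  else 0.

Definition phibar (a b a' : R) (phiY : Y -> Y -> R) (x x' : XS) : R :=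
  if (x.1 != x'.1) && (x.2 == x'.2) then a * phiL a' x.1 x'.1
  else if (x.1 == x'.1) && (x.2 != x'.2) then b * phiY x.2 x'.2
  else if x == x' then (1 - a - b) + b * phiY x.2 x.2
  else 0.

Definition Acc (lam : 'I_n -> R) (f : Y -> R) (a b a' : R) (phiY : Y -> Y -> R)
  (x x' : XS) : R :=
  Num.min 1 ((phibar a b a' phiY x' x * Pibar lam f x') /
             (phibar a b a' phiY x x' * Pibar lam f x)).

Definition Poff (lam : 'I_n -> R) (f : Y -> R) (a b a' : R) (phiY : Y -> Y -> R)
  (x x' : XS) : R :=
  phibar a b a' phiY x x' * Acc lam f a b a' phiY x x'.

Definition PMH (lam : 'I_n -> R) (f : Y -> R) (a b a' : R) (phiY : Y -> Y -> R)
  (x x' : XS) : R :=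
  if x != x' then Poff lam f a b a' phiY x x'
  else 1 - \sum_(z : XS | z != x) Poff lam f a b a' phiY x z.

Fixpoint path_prob (lam : 'I_n -> R) (f : Y -> R) (a b a' : R)
  (phiY : Y -> Y -> R) (x0 : XS) (s : seq XS) : R :=
  match s with
  | [::] => 1
  | x1 :: s' => PMH lam f a b a' phiY x0 x1 * path_prob lam f a b a' phiY x1 s'
  end.

Definition good_params (a b a' : R) : Prop :=
  [/\ 0 < a' < 1, 0 < a < 1, 0 < b < 1 & a + b < 1].

End MHAV.

From HB Require Import structures.
From mathcomp Require Import all_boot all_order all_algebra.
From mathcomp Require Import reals exp.
From mathcomp Require Import zify lra.
Set Implicit Arguments. Unset Strict Implicit. Unset Printing Implicit Defensive.
Import Order.TTheory GRing.Theory Num.Theory.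
Local Open Scope ring_scope.

(* Every factor of a path probability is nonnegative, so the path has positive
   probability iff each transition does. Off the diagonal, a Metropolis-Hastings
   transition is positive iff the proposal is positive in both directions (the
   target is positive), and the sign of a proposal entry only depends on which
   of alpha, beta, alpha', 1 - alpha' multiply it, all positive. On the
   diagonal the holding probability is at least 1 - alpha - beta > 0, because
   the off-diagonal moves are at most the proposal. Hence the positivity
   pattern of the chain, and with it the set of positive-probability paths, is
   independent of the parameters. *)

Section LambdaProposal.
Variables (R : realType) (n : nat).

Lemma sum_ord_eq_if (k : nat) (c : R) : (k < n)%N ->
  \sum_(j : 'I_n) (if val j == k then c else 0) = c.
Proof. by move=> lt_kn; rewrite -big_mkcond (big_pred1 (Ordinal lt_kn)). Qed.

Lemma phiL_ge0 (a' : R) (i j : 'I_n) : 0 <= a' <= 1 -> 0 <= phiL a' i j.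
Proof.
by move=> /andP[a'_ge0 a'_le1]; rewrite /phiL; do !case: ifP => _;
  rewrite ?ler01 ?lexx ?subr_ge0.
Qed.

Lemma phiL_gt0_indep (a1 a2 : R) (i j : 'I_n) : 0 < a1 < 1 -> 0 < a2 < 1 ->
  (0 < phiL a1 i j) = (0 < phiL a2 i j).
Proof.
move=> /andP[a1_gt0 a1_lt1] /andP[a2_gt0 a2_lt1]; rewrite /phiL.
by do !case: ifP => _; rewrite ?subr_gt0 ?a1_gt0 ?a1_lt1 ?a2_gt0 ?a2_lt1.
Qed.

Lemma phiL_xx (a' : R) (i : 'I_n) : phiL a' i i = 0.
Proof. by rewrite /phiL; do !case: ifP => //; lia. Qed.

Lemma phiL_sum (a' : R) (i : 'I_n) : (2 <= n)%N -> \sum_j phiL a' i j = 1.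
Proof.
move=> n_ge2; case: i => i lt_in.
have row_eq (g : 'I_n -> R) : phiL a' (Ordinal lt_in) =1 g ->
    \sum_j phiL a' (Ordinal lt_in) j = \sum_j g j.
  by move=> phiL_g; apply: eq_bigr => j _.
have [i0|i_neq0] := eqVneq i 0%N.
  rewrite (row_eq (fun j => if val j == 1%N then 1 else 0)) ?sum_ord_eq_if //.
  by move=> j; rewrite /phiL /= i0.
have [i_last|i_neq_last] := eqVneq i n.-1.
  rewrite (row_eq (fun j => if val j == n.-2 then 1 else 0)) ?sum_ord_eq_if //;
    last by move=> j; rewrite /phiL /= (negbTE i_neq0) i_last eqxx.
  lia.
rewrite (row_eq (fun j => (if val j == i.+1 then a' else 0)
                          + (if val j == i.-1 then 1 - a' else 0))).
  by rewrite big_split /= !sum_ord_eq_if ?subrKC //; lia.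
move=> j; rewrite /phiL /= (negbTE i_neq0) (negbTE i_neq_last).
by do !case: eqP => //=; rewrite ?addr0 ?add0r //; lia.
Qed.

End LambdaProposal.

Section Proposal.
Variables (R : realType) (Y : finType) (n : nat) (phiY : Y -> Y -> R).
Hypothesis phiY_kernel : markov_kernel phiY.

Let phiY_ge0 y y' : 0 <= phiY y y'. Proof. by case: phiY_kernel. Qed.

Lemma phibar_ge0 a b a' (x z : XS Y n) :
  good_params a b a' -> 0 <= phibar a b a' phiY x z.
Proof.
case=> /andP[a'_gt0 a'_lt1] /andP[a_gt0 _] /andP[b_gt0 _] ab_lt1.
have phiL_x_z : 0 <= phiL a' x.1 z.1 by rewrite phiL_ge0 // !ltW.
have phiY_x_z := phiY_ge0 x.2 z.2; have phiY_x_x := phiY_ge0 x.2 x.2.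
rewrite /phibar; do !case: ifP => _; rewrite ?lexx //; nra.
Qed.

Lemma phibar_xx_gt0 a b a' (x : XS Y n) :
  good_params a b a' -> 0 < phibar a b a' phiY x x.
Proof.
case=> _ _ /andP[b_gt0 _] ab_lt1; rewrite /phibar !eqxx /=.
have := mulr_ge0 (ltW b_gt0) (phiY_ge0 x.2 x.2); lra.
Qed.

Lemma phibar_gt0_indep a1 b1 a1' a2 b2 a2' (x z : XS Y n) :
  good_params a1 b1 a1' -> good_params a2 b2 a2' ->
  (0 < phibar a1 b1 a1' phiY x z) = (0 < phibar a2 b2 a2' phiY x z).
Proof.
move=> g1 g2; case: (eqVneq x z) => [<-|x_neq_z].
  by rewrite !phibar_xx_gt0.
case: g1 g2 => a1'_bd /andP[a1_gt0 _] /andP[b1_gt0 _] _.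
case=> a2'_bd /andP[a2_gt0 _] /andP[b2_gt0 _] _.
rewrite /phibar (negbTE x_neq_z); case: ifP => _.
  by rewrite !pmulr_rgt0 // (phiL_gt0_indep _ _ a1'_bd a2'_bd).
by case: ifP => _; rewrite ?pmulr_rgt0.
Qed.

Lemma phibar_sum a b a' (x : XS Y n) : (2 <= n)%N ->
  \sum_z phibar a b a' phiY x z = 1.
Proof.
move=> n_ge2; case: x => i0 y0.
have row_sum i : \sum_y phibar a b a' phiY (i0, y0) (i, y) =
    (if i == i0 then 1 - a else 0) + a * phiL a' i0 i.
  case: (eqVneq i i0) => [->|i_neq] /=.
    rewrite phiL_xx mulr0 addr0.
    have -> : \sum_y phibar a b a' phiY (i0, y0) (i0, y) =
        \sum_y ((if y == y0 then 1 - a - b else 0) + b * phiY y0 y).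
      apply: eq_bigr => y _; rewrite /phibar /= eqxx /= xpair_eqE eqxx /=.
      by case: (eqVneq y0 y) => [<-|_] /=; rewrite ?eqxx ?add0r // addrC.
    rewrite big_split /= -big_mkcond big_pred1_eq -mulr_sumr.
    by case: phiY_kernel => _ ->; rewrite mulr1 addrNK.
  rewrite add0r -[RHS](big_pred1_eq +%R y0 (fun=> a * phiL a' i0 i)) big_mkcond.
  apply: eq_bigr => y _; rewrite /phibar /=.
  by rewrite xpair_eqE (eq_sym i0) (negbTE i_neq) eq_sym.
rewrite -(pair_bigA _ (fun i y => phibar a b a' phiY (i0, y0) (i, y))) /=.
rewrite (eq_bigr _ (fun i _ => row_sum i)) big_split /= -big_mkcond.
by rewrite big_pred1_eq -mulr_sumr phiL_sum // mulr1 subrK.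
Qed.

End Proposal.

Section MetropolisHastings.
Variables (R : realType) (Y : finType) (n : nat) (phiY : Y -> Y -> R)
  (lam : 'I_n -> R) (f : Y -> R).
Hypotheses (n_ge2 : (2 <= n)%N) (phiY_kernel : markov_kernel phiY)
  (lam_gt0 : forall i, 0 < lam i).

Lemma Pibar_gt0 (x : XS Y n) : 0 < Pibar lam f x.
Proof.
rewrite /Pibar divr_gt0 ?powR_gt0 // /Zc (bigD1 x) //=.
rewrite ltr_wpDr ?powR_gt0 //.
by apply: sumr_ge0 => z _; apply/ltW/powR_gt0.
Qed.

Lemma Poff_ge0 a b a' (x z : XS Y n) : good_params a b a' ->
  0 <= Poff lam f a b a' phiY x z.
Proof.
move=> g; rewrite /Poff /Acc; apply: mulr_ge0; first exact: phibar_ge0.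
by rewrite le_min ler01 divr_ge0 // mulr_ge0 ?phibar_ge0 // ltW // Pibar_gt0.
Qed.

Lemma Poff_le_phibar a b a' (x z : XS Y n) : good_params a b a' ->
  Poff lam f a b a' phiY x z <= phibar a b a' phiY x z.
Proof.
by move=> g; rewrite /Poff /Acc ler_piMr ?phibar_ge0 // ge_min lexx.
Qed.

Lemma Poff_gt0 a b a' (x z : XS Y n) : good_params a b a' ->
  (0 < Poff lam f a b a' phiY x z) =
  (0 < phibar a b a' phiY x z) && (0 < phibar a b a' phiY z x).
Proof.
move=> g; rewrite /Poff /Acc.
have [xz_gt0|xz_le0] := ltP 0 (phibar a b a' phiY x z); last first.
  have -> : phibar a b a' phiY x z = 0.
    by apply/le_anti; rewrite xz_le0 phibar_ge0.
  by rewrite mul0r ltxx.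
rewrite pmulr_rgt0 // lt_min ltr01 /= pmulr_lgt0; last first.
  by rewrite invr_gt0 mulr_gt0 // Pibar_gt0.
by rewrite pmulr_lgt0 ?Pibar_gt0.
Qed.

Lemma PMH_xx_gt0 a b a' (x : XS Y n) : good_params a b a' ->
  0 < PMH lam f a b a' phiY x x.
Proof.
move=> g; rewrite /PMH eqxx /= subr_gt0.
have := phibar_sum phiY_kernel a b a' x n_ge2.
rewrite (bigD1 x) //= => phibar_total.
have Poff_le : \sum_(z | z != x) Poff lam f a b a' phiY x z <=
               \sum_(z | z != x) phibar a b a' phiY x z.
  by apply: ler_sum => z _; apply: Poff_le_phibar.
have := phibar_xx_gt0 phiY_kernel x g; lra.
Qed.

Lemma PMH_ge0 a b a' (x z : XS Y n) : good_params a b a' ->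
  0 <= PMH lam f a b a' phiY x z.
Proof.
move=> g; case: (eqVneq x z) => [<-|x_neq_z]; first exact/ltW/PMH_xx_gt0.
by rewrite /PMH x_neq_z Poff_ge0.
Qed.

Lemma PMH_gt0_indep a1 b1 a1' a2 b2 a2' :
  good_params a1 b1 a1' -> good_params a2 b2 a2' ->
  (fun x z : XS Y n => 0 < PMH lam f a1 b1 a1' phiY x z) =2
  (fun x z : XS Y n => 0 < PMH lam f a2 b2 a2' phiY x z).
Proof.
move=> g1 g2 x z /=.
case: (eqVneq x z) => [<-|x_neq_z]; first by rewrite !PMH_xx_gt0.
by rewrite /PMH x_neq_z !Poff_gt0 // !(phibar_gt0_indep phiY_kernel _ _ g1 g2).
Qed.

Lemma path_prob_ge0 a b a' (x0 : XS Y n) (s : seq (XS Y n)) :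
  good_params a b a' -> 0 <= path_prob lam f a b a' phiY x0 s.
Proof.
move=> g; elim: s x0 => [|x s IH] x0 /=; first exact: ler01.
by rewrite mulr_ge0 ?PMH_ge0.
Qed.

Lemma path_prob_gt0 a b a' (x0 : XS Y n) (s : seq (XS Y n)) :
  good_params a b a' ->
  (0 < path_prob lam f a b a' phiY x0 s) =
  path (fun x z => 0 < PMH lam f a b a' phiY x z) x0 s.
Proof.
move=> g; elim: s x0 => [|x s IH] x0 /=; first exact: ltr01.
by rewrite mulr_ge0_gt0 ?PMH_ge0 ?path_prob_ge0 ?IH.
Qed.

End MetropolisHastings.

Theorem corollary18 (R : realType) (Y : finType) (y0 : Y) (f : Y -> R)
  (n : nat) (lam : 'I_n -> R) (phiY : Y -> Y -> R) :
  (2 <= n)%N ->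
  (forall i, 0 < lam i) ->
  (forall i j : 'I_n, (i < j)%N -> lam i < lam j) ->
  markov_kernel phiY -> irreducible phiY ->
  forall (a1 b1 a1' a2 b2 a2' : R),
  good_params a1 b1 a1' -> good_params a2 b2 a2' ->
  forall (x0 : XS Y n) (s : seq (XS Y n)),
    0 < path_prob lam f a1 b1 a1' phiY x0 s <->
    0 < path_prob lam f a2 b2 a2' phiY x0 s.
Proof.
move=> n_ge2 lam_gt0 _ phiY_kernel _ a1 b1 a1' a2 b2 a2' g1 g2 x0 s.
rewrite !path_prob_gt0 //.
by rewrite (eq_path (PMH_gt0_indep f n_ge2 phiY_kernel lam_gt0 g1 g2)).
Qed.
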